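(* Let $p$ be a prime, let $1\le m_1\le\cdots\le m_n$ be integers and $G=\mathbb{Z}_{p^{m_1}}\times\cdots\times\mathbb{Z}_{p^{m_n}}$, with $g_i$ a fixed generator of the $i$-th factor, so every element of $G$ is written $g_1^{s_1}\cdots g_n^{s_n}$ with $s_i\in\mathbb{Z}$. Let $A$ be a finite abelian $p$-group (written additively). Let $\Lambda=\{(i,j)\colon 1\le i<j\le n\}$, and for $\lambda=(i,j)\in\Lambda$ write $\dot\lambda=i$, $\ddot\lambda=j$. For $\mathbf{a}=(a_1,\ldots,a_n)\in A^n$ and $\mathbf{b}=(b_\lambda)_{\lambda\in\Lambda}\in A^\Lambda$ with $p^{m_{\dot\lambda}}b_\lambda=0$ for all $\lambda$, define $\alpha_{\mathbf{a},\mathbf{b}}\colon G\times G\to A$ by $$\alpha_{\mathbf{a},\mathbf{b}}(g_1^{s_1}\cdots g_n^{s_n},g_1^{t_1}\cdots g_n^{t_n})=\sum_{i=1}^n\Big[\frac{\langle s_i\rangle_{p^{m_i}}+\langle t_i\rangle_{p^{m_i}}}{p^{m_i}}\Big]a_i-\sum_{\lambda\in\Lambda}t_{\dot\lambda}s_{\ddot\lambda}b_\lambda .$$ Then each such $\alpha_{\mathbf{a},\mathbf{b}}$ is a $2$-cocycle, and every element of $H^2(G;A)$ is represented by $\alpha_{\mathbf{a},\mathbf{b}}$ for some $\mathbf{a}\in A^n$ and some $\mathbf{b}$ with $b_\lambda\in\ker(p^{m_{\dot\lambda}})$ for all $\lambda\in\Lambda$. For such $\mathbf{a},\mathbf{b}$,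 $[\alpha_{\mathbf{a},\mathbf{b}}]=0$ in $H^2(G;A)$ if and only if $a_i\in p^{m_i}A$ for all $i\in\{1,\ldots,n\}$ and $b_\lambda=0$ for all $\lambda\in\Lambda$. Consequently $[\alpha_{\mathbf{a},\mathbf{b}}]\mapsto\big((a_i+p^{m_i}A)_{i},(b_\lambda)_{\lambda}\big)$ gives an isomorphism $$H^2(G;A)\cong\prod_{i=1}^n A/p^{m_i}A\times\prod_{\lambda\in\Lambda}\ker\big(A\xrightarrow{\,p^{m_{\dot\lambda}}\,}A\big).$$
   Context: $[x]$ denotes the largest integer not exceeding $x$; for integers $q>0$ and $i$, $\langle i\rangle_q\in\{0,\ldots,q-1\}$ is the remainder of $i$ modulo $q$. $\ker(p^k)$ denotes the kernel of the endomorphism $a\mapsto p^ka$ of $A$. *)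

From HB Require Import structures.
From mathcomp Require Import all_boot all_algebra.

Import GRing.Theory.
Local Open Scope ring_scope.

(* G = Z_{p^{m_0}} x ... x Z_{p^{m_{n-1}}}, an element g_1^{s_1}...g_n^{s_n}
   is represented by its vector of canonical exponents s_i = <s_i>_{p^{m_i}}. *)
Definition Gp (p n : nat) (m : 'I_n -> nat) :=
  {dffun forall i : 'I_n, 'I_(p ^ m i)}.

Lemma ord_pos (k : nat) (x : 'I_k) : (0 < k)%N.
Proof. exact: leq_ltn_trans (leq0n x) (ltn_ord x). Qed.

Definition ordadd (k : nat) (x y : 'I_k) : 'I_k :=
  Ordinal (ltn_pmod (x + y)%N (ord_pos k x)).

Definition Gmul (p n : nat) (m : 'I_n -> nat) (s t : Gp p n m) : Gp p n m :=
  @finfun _ (fun i : 'I_n => 'I_(p ^ m i)) (fun i => ordadd (p ^ m i) (s i) (t i)).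

Definition is_cocycle (p n : nat) (m : 'I_n -> nat) (A : zmodType)
  (f : Gp p n m -> Gp p n m -> A) : Prop :=
  forall g h k, f h k - f (Gmul p n m g h) k + f g (Gmul p n m h k) - f g h = 0.

Definition is_coboundary (p n : nat) (m : 'I_n -> nat) (A : zmodType)
  (f : Gp p n m -> Gp p n m -> A) : Prop :=
  exists c : Gp p n m -> A, forall g h, f g h = c h - c (Gmul p n m g h) + c g.

Definition cohomologous (p n : nat) (m : 'I_n -> nat) (A : zmodType)
  (f f' : Gp p n m -> Gp p n m -> A) : Prop :=
  is_coboundary p n m A (fun g h => f g h - f' g h).

(* b_lambda for lambda = (i,j), i < j, is stored as b i j (other entries unused) *)
Definition valid_b (p n : nat) (m : 'I_n -> nat) (A : zmodType)
  (b : 'I_n -> 'I_n -> A) : Prop :=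
  forall i j : 'I_n, (i < j)%N -> b i j *+ (p ^ m i) = 0.

Definition alpha (p n : nat) (m : 'I_n -> nat) (A : zmodType)
  (a : 'I_n -> A) (b : 'I_n -> 'I_n -> A) (s t : Gp p n m) : A :=
  \sum_(i < n) a i *+ ((s i + t i) %/ p ^ m i)%N
  - \sum_(i < n) \sum_(j < n | (i < j)%N) b i j *+ (t i * s j)%N.

Definition in_pmul (A : zmodType) (p k : nat) (x : A) : Prop :=
  exists y : A, x = y *+ (p ^ k).

(* A normalized 2-cocycle f on G defines the central extension E = A x G with
   product (x, g) (y, h) = (x + y + f g h, g h).  In E the commutators of the
   lifts u_i = (0, g_i) of the generators, and the powers u_i ^ (p ^ m_i), lie in
   the central copy of A: call them b_ij and a_i.  Since commutators are central,
   multiplying the sections s(g) = u_1 ^ g_1 ... u_n ^ g_n only produces carries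
   and commutators, and gives s(g) s(h) = alpha_{a,b}(g, h) s(g h); comparing
   A-components shows that f is cohomologous to alpha_{a,b}.  Conversely, if
   alpha_{a,b} is a coboundary, restricting it to the cyclic factor <g_i> shows
   that a_i is divisible by p ^ m_i, and b_ij = alpha(g_i, g_j) - alpha(g_j, g_i)
   vanishes because coboundaries on an abelian group are symmetric. *)

From HB Require Import structures.
From mathcomp Require Import all_boot all_algebra zify.
Set Implicit Arguments.
Unset Strict Implicit.
Unset Printing Implicit Defensive.
Import GRing.Theory.
Local Open Scope ring_scope.

Lemma carry_cocycle (N x y z : nat) : (0 < N)%N ->
  ((y + z) %/ N + (x + (y + z) %% N) %/ N = ((x + y) %% N + z) %/ N + (x + y) %/ N)%N.
Proof.
move=> N_gt0.
have carry_sum u v w : ((u + v) %/ N + ((u + v) %% N + w) %/ N = (u + v + w) %/ N)%N.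
  by rewrite [in RHS](divn_eq (u + v) N) -addnA divnMDl.
by rewrite [RHS]addnC (addnC x) !carry_sum addnC addnA.
Qed.

Lemma mulrn_modn {V : zmodType} {v : V} {N : nat} :
  v *+ N = 0 -> forall k, v *+ k = v *+ (k %% N).
Proof. by move=> vN0 k; rewrite {1}(divn_eq k N) mulrnDr mulnC mulrnA vN0 mul0rn add0r. Qed.

Section CentralCommutators.
Variable G : groupType.
Implicit Types x y z : G.
Local Open Scope group_scope.

Definition central z := forall x, commute x z.

Lemma central_mulgAC x y z : central z -> x * z * y = x * y * z.
Proof. by move=> cz; rewrite -mulgA -(cz y) mulgA. Qed.

Lemma centralX z k : central z -> central (z ^+ k).
Proof. by move=> cz x; apply: commuteX. Qed.

Lemma central_prod I (r : seq I) (P : pred I) (F : I -> G) :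
  (forall i, P i -> central (F i)) -> central (\prod_(i <- r | P i) F i).
Proof. by move=> cF x; apply: commute_prod => i /cF. Qed.

Lemma central_conj z y : central z -> z ^ y = z.
Proof. by move=> cz; rewrite conjgE -(cz y) mulKg. Qed.

Lemma commXXg_central x y a b : central [~ x, y] ->
  [~ x ^+ a, y ^+ b] = [~ x, y] ^+ (a * b)%N.
Proof.
move=> cc; set c := [~ x, y] in cc *.
have xJy : x ^ y = x * c by rewrite /c commgEl mulVKg.
have xJyX k : x ^ (y ^+ k) = x * c ^+ k.
  elim: k => [|k IHk]; first by rewrite conjg1 mulg1.
  by rewrite expgSr conjgM IHk conjMg xJy (central_conj _ (centralX k cc)) expgS [RHS]mulgA.
rewrite commgEl conjXg xJyX expgMn; last exact: (centralX b cc x).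
by rewrite mulKg mulnC expgnA.
Qed.

Lemma commgC_expg x y a b : central [~ x, y] ->
  x ^+ a * y ^+ b = y ^+ b * x ^+ a * [~ x, y] ^+ (a * b)%N.
Proof. by move=> cc; rewrite commgC commXXg_central. Qed.

Lemma commgC_prod x a (u : nat -> G) (t : nat -> nat) r :
  (forall i, central [~ x, u i]) ->
  x ^+ a * \prod_(0 <= i < r) u i ^+ t i =
  \prod_(0 <= i < r) u i ^+ t i * x ^+ a * \prod_(0 <= i < r) [~ x, u i] ^+ (a * t i)%N.
Proof.
move=> cxu; elim: r => [|r IHr]; first by rewrite !big_geq // !mulg1 mul1g.
have cC : central (\prod_(0 <= i < r) [~ x, u i] ^+ (a * t i)%N).
  by apply: central_prod => i _; apply: centralX.
rewrite !big_nat_recr //= mulgA IHr -!mulgA; congr (_ * _).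
by rewrite -(cC (u r ^+ t r)) [LHS]mulgA (commgC_expg _ _ (cxu r)) -!mulgA cC.
Qed.

Lemma prodXg_mul (u : nat -> G) (s t : nat -> nat) r :
  (forall i j, central [~ u i, u j]) ->
  \prod_(0 <= i < r) u i ^+ s i * \prod_(0 <= i < r) u i ^+ t i =
  \prod_(0 <= i < r) u i ^+ (s i + t i)%N *
  \prod_(0 <= j < r) \prod_(0 <= i < j) [~ u j, u i] ^+ (s j * t i)%N.
Proof.
move=> cu; elim: r => [|r IHr]; first by rewrite !big_geq // mulg1.
rewrite !big_nat_recr //= expgnDr.
set x := u r.
set C := \prod_(0 <= j < r) \prod_(0 <= i < j) _.
set D := \prod_(0 <= i < r) [~ x, u i] ^+ _.
have cC : central C.
  by apply: central_prod => j _; apply: central_prod => i _; apply/centralX/cu.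
have cD : central D by apply: central_prod => i _; apply/centralX/cu.
rewrite -[LHS]mulgA [X in _ * X = _]mulgA commgC_prod; last exact: cu.
by rewrite !mulgA IHr -/C (central_mulgAC _ _ cD) !(central_mulgAC _ _ cC).
Qed.

End CentralCommutators.

Section CyclicProduct.
Variables (p n : nat) (m : 'I_n -> nat).
Local Notation G := (Gp p n m).
Local Notation N i := (p ^ m i)%N.
Local Notation gmul := (Gmul p n m).

Lemma Gp_ext (g h : G) : (forall i, (g i : nat) = h i) -> g = h.
Proof. by move=> eq_gh; apply/ffunP => i; apply/val_inj/eq_gh. Qed.

Lemma GmulE (g h : G) i : (gmul g h i : nat) = ((g i + h i) %% N i)%N.
Proof. by rewrite ffunE. Qed.

Lemma GmulA : associative gmul.
Proof. by move=> g h k; apply: Gp_ext => i; rewrite !GmulE modnDml modnDmr addnA. Qed.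

Lemma GmulC : commutative gmul.
Proof. by move=> g h; apply: Gp_ext => i; rewrite !GmulE addnC. Qed.

Variable p_gt0 : (0 < p)%N.

Lemma N_gt0 i : (0 < N i)%N.
Proof. by rewrite expn_gt0 p_gt0. Qed.

(* [Gexps s] is the element g_1 ^ s_1 ... g_n ^ s_n and [genX i x] is g_i ^ x; the
   index of [genX] is a nat so that generators can be enumerated along [0, n). *)
Definition Gexps (s : 'I_n -> nat) : G :=
  @finfun _ (fun i => 'I_(p ^ m i)) (fun i => Ordinal (ltn_pmod (s i) (N_gt0 i))).

Lemma GexpsE s i : (Gexps s i : nat) = (s i %% N i)%N.
Proof. by rewrite ffunE. Qed.

Definition Gone : G := Gexps (fun=> 0%N).
Definition Ginv (g : G) : G := Gexps (fun i => N i - g i)%N.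

Lemma Gmul1g : left_id Gone gmul.
Proof. by move=> g; apply: Gp_ext => i; rewrite GmulE GexpsE mod0n add0n modn_small. Qed.

Lemma Gmulg1 : right_id Gone gmul.
Proof. by move=> g; rewrite GmulC Gmul1g. Qed.

Lemma GmulVg : left_inverse Gone Ginv gmul.
Proof.
move=> g; apply: Gp_ext => i; rewrite GmulE !GexpsE modnDml subnK ?modnn ?mod0n //.
exact: ltnW.
Qed.

Lemma GmulgV : right_inverse Gone Ginv gmul.
Proof. by move=> g; rewrite GmulC GmulVg. Qed.

Definition genX (i x : nat) : G := Gexps (fun k => if k == i :> nat then x else 0%N).

Lemma genXE i x k : (genX i x k : nat) = (if k == i :> nat then x %% N k else 0)%N.
Proof. by rewrite GexpsE; case: eqP; rewrite ?mod0n. Qed.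

Lemma genX0 i : genX i 0 = Gone.
Proof. by apply: Gp_ext => k; rewrite genXE GexpsE mod0n if_same. Qed.

Lemma genXD i x y : gmul (genX i x) (genX i y) = genX i (x + y).
Proof.
apply: Gp_ext => k; rewrite GmulE !genXE.
by case: eqP => _; rewrite ?modnDm ?mod0n.
Qed.

Lemma genX_modn (i : 'I_n) x : genX i (x %% N i) = genX i x.
Proof.
by apply: Gp_ext => k; rewrite !genXE; case: eqP => // /val_inj ->; rewrite modn_mod.
Qed.

Lemma Gprod_coord I (r : seq I) (P : pred I) (F : I -> G) k :
  ((\big[gmul/Gone]_(i <- r | P i) F i) k : nat) = ((\sum_(i <- r | P i) F i k) %% N k)%N.
Proof.
elim/big_rec2: _ => [|i y g _ eq_y]; first by rewrite GexpsE.
by rewrite GmulE eq_y modnDmr.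
Qed.

Lemma Gprod_genX (g : G) : \big[gmul/Gone]_(i < n) genX i (g i) = g.
Proof.
apply: Gp_ext => k; rewrite Gprod_coord (bigD1 k) //= big1 => [|i /negbTE ne_ik].
  by rewrite genXE eqxx addn0 !modn_small.
by rewrite genXE; case: eqP => // /val_inj eq_ki; rewrite eq_ki eqxx in ne_ik.
Qed.

Definition Gcoord (g : G) (k : nat) : nat := if insub k is Some i then g i : nat else 0%N.

Lemma GcoordE g (i : 'I_n) : Gcoord g i = g i.
Proof. by rewrite /Gcoord valK. Qed.

End CyclicProduct.

Section Cochains.
Variables (p n : nat) (m : 'I_n -> nat) (A : zmodType).
Local Notation G := (Gp p n m).
Local Notation N i := (p ^ m i)%N.
Local Notation gmul := (Gmul p n m).
Implicit Types (f : G -> G -> A) (a : 'I_n -> A) (b : 'I_n -> 'I_n -> A).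

Lemma cocycleP f : is_cocycle p n m A f <->
  forall g h k, f h k + f g (gmul h k) = f (gmul g h) k + f g h.
Proof.
have sub4 x y z w : x - y + z - w = (x + z) - (y + w) :> A.
  by rewrite [x - y + z]addrAC opprD addrA.
split=> cf g h k; last by rewrite sub4 cf subrr.
by have /eqP := cf g h k; rewrite sub4 subr_eq0 => /eqP.
Qed.

Lemma cocycleB f1 f2 : is_cocycle p n m A f1 -> is_cocycle p n m A f2 ->
  is_cocycle p n m A (fun g h => f1 g h - f2 g h).
Proof.
move=> /cocycleP cf1 /cocycleP cf2; apply/cocycleP => g h k.
by rewrite addrACA -opprD cf1 cf2 opprD addrACA.
Qed.

Lemma cocycle_const (k : A) : is_cocycle p n m A (fun _ _ => k).
Proof. by move=> g h l; rewrite subrr add0r subrr. Qed.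

Definition carry_cochain a (s t : G) : A :=
  \sum_(i < n) a i *+ ((s i + t i) %/ N i).

Definition cross_cochain b (s t : G) : A :=
  \sum_(i < n) \sum_(j < n | (i < j)%N) b i j *+ (t i * s j).

Lemma alphaE a b s t : alpha p n m A a b s t = carry_cochain a s t - cross_cochain b s t.
Proof. by []. Qed.

Lemma alphaB a a' b b' s t :
  alpha p n m A a b s t - alpha p n m A a' b' s t =
  alpha p n m A (fun i => a i - a' i) (fun i j => b i j - b' i j) s t.
Proof.
have subrACA (x y z w : A) : (x - y) - (z - w) = (x - z) - (y - w).
  by rewrite !opprB addrACA [RHS]addrACA [- y + _]addrC.
rewrite !alphaE subrACA /carry_cochain /cross_cochain -!sumrB; apply: eq_bigr => i _.
by rewrite mulrnBl -sumrB; congr (_ - _); apply: eq_bigr => j _; rewrite mulrnBl.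
Qed.

Lemma carry_cochain_cocycle a : (0 < p)%N -> is_cocycle p n m A (carry_cochain a).
Proof.
move=> p_gt0; apply/cocycleP => g h k; rewrite -!big_split /=.
apply: eq_bigr => i _; rewrite -!mulrnDr !GmulE carry_cocycle //.
by rewrite expn_gt0 p_gt0.
Qed.

Lemma cross_term_cocycle (M N gj hj hi ki : nat) : (M %| N)%N ->
  (ki * hj + (hi + ki) %% M * gj = ki * ((gj + hj) %% N) + hi * gj %[mod M])%N.
Proof.
move=> dvd_MN; rewrite -modnDmr modnMml modnDmr -[in RHS]modnDml -[in RHS]modnMmr.
rewrite (modn_dvdm _ dvd_MN) modnMmr modnDml; congr (_ %% _)%N.
rewrite mulnDl mulnDr; lia.
Qed.

Lemma cross_cochain_cocycle b :
  (forall i j : 'I_n, (i <= j)%N -> (m i <= m j)%N) ->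
  valid_b p n m A b -> is_cocycle p n m A (cross_cochain b).
Proof.
move=> m_mono bN0; apply/cocycleP => g h k; rewrite -!big_split /=.
apply: eq_bigr => i _; rewrite -!big_split /=; apply: eq_bigr => j lt_ij.
rewrite -!mulrnDr !GmulE (mulrn_modn (bN0 i j lt_ij)).
rewrite [RHS](mulrn_modn (bN0 i j lt_ij)); congr (_ *+ _).
by apply: cross_term_cocycle; rewrite dvdn_exp2l // m_mono // ltnW.
Qed.

Lemma alpha_cocycle a b : (0 < p)%N ->
  (forall i j : 'I_n, (i <= j)%N -> (m i <= m j)%N) ->
  valid_b p n m A b -> is_cocycle p n m A (alpha p n m A a b).
Proof.
move=> p_gt0 m_mono bN0; apply: cocycleB; first exact: carry_cochain_cocycle.
exact: cross_cochain_cocycle.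
Qed.

End Cochains.

Section Coboundaries.
Variables (p n : nat) (m : 'I_n -> nat) (A : zmodType).
Local Notation G := (Gp p n m).
Local Notation N i := (p ^ m i)%N.
Local Notation gmul := (Gmul p n m).
Implicit Types (f : G -> G -> A) (a : 'I_n -> A) (b : 'I_n -> 'I_n -> A).
Implicit Types (g h : G) (i j k : 'I_n).

Lemma eq_coboundary f f' : (forall g h, f g h = f' g h) ->
  is_coboundary p n m A f <-> is_coboundary p n m A f'.
Proof. by move=> eq_f; split=> -[c cf]; exists c => g h; rewrite -cf eq_f. Qed.

Lemma coboundary_sym f g h : is_coboundary p n m A f -> f g h = f h g.
Proof. by case=> c cf; rewrite !cf GmulC [LHS]addrAC [RHS]addrAC (addrC (c h)). Qed.

Lemma coboundary_const (k : A) : is_coboundary p n m A (fun _ _ => k).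
Proof. by exists (fun=> k) => g h; rewrite subrr add0r. Qed.

Lemma coboundaryD f f' : is_coboundary p n m A f -> is_coboundary p n m A f' ->
  is_coboundary p n m A (fun g h => f g h + f' g h).
Proof.
case=> c cf [c' cf']; exists (fun g => c g + c' g) => g h.
by rewrite cf cf' opprD addrACA; congr (_ + _); exact: addrACA.
Qed.

Lemma cyclic_carry_coboundary (M : nat) (a0 : A) (d : nat -> A) : (1 < M)%N ->
  (forall x y, (x < M)%N -> (y < M)%N ->
     a0 *+ ((x + y) %/ M) = d y - d ((x + y) %% M)%N + d x) ->
  a0 = d 1%N *+ M.
Proof.
move=> M_gt1 dd; have M_gt0 : (0 < M)%N by exact: ltnW.
have d0 : d 0%N = 0.
  by have := dd 0%N 0%N M_gt0 M_gt0; rewrite div0n mod0n mulr0n subrr add0r => <-.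
have dS y : (y.+1 < M)%N -> d y.+1 = d y + d 1%N.
  move=> lt_yM; have := dd 1%N y M_gt1 (ltnW lt_yM).
  rewrite add1n divn_small // modn_small // mulr0n => /eqP.
  by rewrite eq_sym addrAC subr_eq0 => /eqP.
have dX y : (y < M)%N -> d y = d 1%N *+ y.
  elim: y => [|y IHy] lt_yM; first by rewrite d0 mulr0n.
  by rewrite dS // IHy ?mulrSr // ltnW.
have lt_predM : (M.-1 < M)%N by rewrite prednK.
have := dd 1%N M.-1 M_gt1 lt_predM.
by rewrite add1n prednK // divnn M_gt0 mulr1n modnn d0 subr0 dX // -mulrSr prednK.
Qed.

Variable p_gt0 : (0 < p)%N.
Local Notation genX := (genX m p_gt0).

Lemma carry_cochain_small a g h :
  (forall k, g k + h k < N k)%N -> carry_cochain a g h = 0.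
Proof. by move=> small; apply: big1 => i _; rewrite divn_small ?mulr0n. Qed.

Lemma carry_cochain_genX a i x y :
  carry_cochain a (genX i x) (genX i y) = a i *+ ((x %% N i + y %% N i) %/ N i).
Proof.
rewrite /carry_cochain (bigD1 i) //= !genXE eqxx big1 ?addr0 // => k ne_ki.
by rewrite !genXE val_eqE (negbTE ne_ki) addn0 div0n mulr0n.
Qed.

Lemma cross_cochain_genX b (i j : 'I_n) x y :
  cross_cochain b (genX j x) (genX i y) =
  if (i < j)%N then b i j *+ (y %% N i * (x %% N j)) else 0.
Proof.
rewrite /cross_cochain (bigD1 i) //= [X in _ + X]big1 ?addr0 => [|k ne_ki]; last first.
  by apply: big1 => l _; rewrite genXE val_eqE (negbTE ne_ki).
case: ifP => lt_ij.
  rewrite (bigD1 j) //= [X in _ + X]big1 ?addr0 => [|l /andP[_ ne_lj]].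
    by rewrite !genXE !eqxx.
  by rewrite !genXE !val_eqE (negbTE ne_lj) muln0.
apply: big1 => l lt_il; rewrite [in X in (_ * X)%N]genXE val_eqE.
case: eqP => [eq_lj|]; last by rewrite muln0.
by rewrite -eq_lj lt_il in lt_ij.
Qed.

Lemma alpha_genX a b i x y : (x < N i)%N -> (y < N i)%N ->
  alpha p n m A a b (genX i x) (genX i y) = a i *+ ((x + y) %/ N i).
Proof.
move=> lt_x lt_y.
by rewrite alphaE carry_cochain_genX cross_cochain_genX ltnn subr0 !modn_small.
Qed.

Lemma alpha_genX_comm a b (i j : 'I_n) : (forall k, 1 < N k)%N -> (i < j)%N ->
  alpha p n m A a b (genX i 1) (genX j 1) - alpha p n m A a b (genX j 1) (genX i 1) = b i j.
Proof.
move=> N_gt1 lt_ij; have ne_ij : i != j by rewrite neq_ltn lt_ij.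
have ne_ji : j != i by rewrite eq_sym.
have no_carry k k' : k != k' -> carry_cochain a (genX k 1) (genX k' 1) = 0.
  move=> ne_kk'; apply: carry_cochain_small => l; rewrite !genXE !modn_small // !val_eqE.
  apply: leq_ltn_trans (N_gt1 l); case: eqP => [->|_]; last by case: (l == k').
  by rewrite (negbTE ne_kk').
rewrite !alphaE (no_carry _ _ ne_ij) (no_carry _ _ ne_ji).
rewrite !cross_cochain_genX lt_ij ltnNge ltnW //=.
by rewrite !modn_small // muln1 mulr1n subrr !sub0r opprK.
Qed.

Lemma alpha_coboundaryP a b : (forall k, 1 < N k)%N ->
  is_coboundary p n m A (alpha p n m A a b) <->
  (forall i, in_pmul A p (m i) (a i)) /\ (forall i j : 'I_n, (i < j)%N -> b i j = 0).
Proof.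
move=> N_gt1; split=> [cob|[a_div b0]].
  split=> [i|i j lt_ij].
    have [c dc] := cob; exists (c (genX i 1%N)).
    apply: (cyclic_carry_coboundary (d := fun x => c (genX i x)) (N_gt1 i)) => x y lt_x lt_y.
    by rewrite -(alpha_genX a b) // dc genXD genX_modn.
  by rewrite -(alpha_genX_comm a b N_gt1 lt_ij) (coboundary_sym _ _ cob) subrr.
have [y ay] := fin_all_exists a_div.
exists (fun g => \sum_(i < n) y i *+ g i) => g h.
rewrite alphaE [cross_cochain _ _ _]big1 ?subr0 => [|i _]; last first.
  by apply: big1 => j /b0 ->; rewrite mul0rn.
rewrite /carry_cochain -sumrB -big_split; apply: eq_bigr => i _ /=.
have split_gh : y i *+ g i + y i *+ h i =
    y i *+ (N i * ((g i + h i) %/ N i)) + y i *+ ((g i + h i) %% N i).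
  by rewrite -!mulrnDr mulnC -divn_eq.
by rewrite GmulE ay -mulrnA addrAC [_ *+ h i + _]addrC split_gh addrK.
Qed.

Lemma alpha_cohomologousP a a' b b' : (forall k, 1 < N k)%N ->
  cohomologous p n m A (alpha p n m A a b) (alpha p n m A a' b') <->
  (forall i, in_pmul A p (m i) (a i - a' i)) /\
  (forall i j : 'I_n, (i < j)%N -> b i j = b' i j).
Proof.
move=> N_gt1; apply: iff_trans (eq_coboundary (alphaB a a' b b')) _.
apply: iff_trans (alpha_coboundaryP _ _ N_gt1) _.
split=> -[a_div b_eq]; split=> // i j lt_ij.
  by apply/eqP; rewrite -subr_eq0 b_eq.
by rewrite b_eq // subrr.
Qed.

End Coboundaries.

Section NormalizedCocycle.
Variables (p n : nat) (m : 'I_n -> nat) (A : zmodType) (p_gt0 : (0 < p)%N).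
Local Notation G := (Gp p n m).
Local Notation gmul := (Gmul p n m).
Local Notation one := (Gone m p_gt0).
Variables (f : G -> G -> A) (f_cocycle : is_cocycle p n m A f) (f_norm : f one one = 0).

Lemma cocycle_norm1g g : f one g = 0.
Proof.
by have := proj1 (cocycleP f) f_cocycle one one g; rewrite !Gmul1g f_norm => /addrI.
Qed.

Lemma cocycle_normg1 g : f g one = 0.
Proof.
have := proj1 (cocycleP f) f_cocycle g one one.
by rewrite !Gmulg1 f_norm => /esym /addIr.
Qed.

Lemma cocycle_normVg g : f (Ginv p_gt0 g) g = f g (Ginv p_gt0 g).
Proof.
have := proj1 (cocycleP f) f_cocycle g (Ginv p_gt0 g) g.
by rewrite GmulVg GmulgV cocycle_norm1g cocycle_normg1 addr0 add0r.
Qed.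

End NormalizedCocycle.

(* The cocycle hypotheses are phantom parameters: they make the group structure
   declared below, whose laws depend on them, canonical on this type. *)
Definition extension p n m (A : zmodType) (p_gt0 : (0 < p)%N)
    (f : Gp p n m -> Gp p n m -> A)
    of is_cocycle p n m A f & f (Gone m p_gt0) (Gone m p_gt0) = 0 :=
  (A * Gp p n m)%type.

Section Extension.
Variables (p n : nat) (m : 'I_n -> nat) (A : zmodType) (p_gt0 : (0 < p)%N).
Local Notation G := (Gp p n m).
Local Notation N i := (p ^ m i)%N.
Local Notation gmul := (Gmul p n m).
Local Notation one := (Gone m p_gt0).
Local Notation ginv := (Ginv p_gt0).
Local Notation genX := (genX m p_gt0).
Variables (f : G -> G -> A) (f_cocycle : is_cocycle p n m A f) (f_norm : f one one = 0).
Local Notation E := (extension f_cocycle f_norm).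
Implicit Types (i j : 'I_n) (g h : G).

Definition ext_mul (x y : E) : E := (x.1 + y.1 + f x.2 y.2, gmul x.2 y.2).
Definition ext_one : E := (0, one).
Definition ext_inv (x : E) : E := (- x.1 - f (ginv x.2) x.2, ginv x.2).

Lemma ext_mulA : associative ext_mul.
Proof.
move=> [x g] [y h] [z k]; rewrite /ext_mul /= GmulA; congr (_, _).
rewrite -!addrA (proj1 (cocycleP f) f_cocycle g h k); congr (_ + _).
by congr (_ + _); rewrite [RHS]addrC -addrA.
Qed.

Lemma ext_mul1g : left_id ext_one ext_mul.
Proof. by move=> [x g]; rewrite /ext_mul /= Gmul1g add0r cocycle_norm1g // addr0. Qed.

Lemma ext_mulg1 : right_id ext_one ext_mul.
Proof. by move=> [x g]; rewrite /ext_mul /= Gmulg1 addr0 cocycle_normg1 // addr0. Qed.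

Lemma ext_mulVg : left_inverse ext_one ext_inv ext_mul.
Proof.
move=> [x g]; rewrite /ext_mul /ext_one /= GmulVg; congr (_, _).
by rewrite addrAC subrK addrC subrr.
Qed.

Lemma ext_mulgV : right_inverse ext_one ext_inv ext_mul.
Proof.
move=> [x g]; rewrite /ext_mul /ext_one /= GmulgV; congr (_, _).
by rewrite cocycle_normVg // addrA subrK subrr.
Qed.

HB.instance Definition _ := Choice.copy E (A * G)%type.
HB.instance Definition _ :=
  isGroup.Build E ext_mulA ext_mul1g ext_mulg1 ext_mulVg ext_mulgV.

Local Open Scope group_scope.

Lemma ext_mulE (x y : A) (g h : G) :
  ((x, g) : E) * ((y, h) : E) = (x + y + f g h, gmul g h).
Proof. by []. Qed.

Lemma ext_mul_fst (z w : E) : (z * w).1 = z.1 + w.1 + f z.2 w.2.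
Proof. by case: z w => x g [y h]. Qed.

Definition embA (x : A) : E := (x, one).

Lemma embAD x y : embA (x + y) = embA x * embA y.
Proof. by rewrite /embA ext_mulE f_norm addr0 Gmul1g. Qed.

Lemma embA_inj : injective embA.
Proof. by move=> x y []. Qed.

Lemma embAX x k : embA x ^+ k = embA (x *+ k).
Proof. by elim: k => [|k IHk]; rewrite ?mulr0n // expgS IHk -embAD mulrS. Qed.

Lemma embAV x : (embA x)^-1 = embA (- x).
Proof. by apply: mulg1_eq; rewrite -embAD subrr. Qed.

Lemma embA_sum I (r : seq I) (P : pred I) (F : I -> A) :
  \prod_(i <- r | P i) embA (F i) = embA (\sum_(i <- r | P i) F i).
Proof. by rewrite (@big_morph _ _ embA 1 *%g 0 +%R embAD erefl). Qed.

Lemma embA_central x : central (embA x).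
Proof.
move=> [y g]; rewrite /commute /embA !ext_mulE Gmul1g Gmulg1.
by rewrite cocycle_norm1g // cocycle_normg1 // !addr0 addrC.
Qed.

Lemma ext_kerE (z : E) : z.2 = one -> z = embA z.1.
Proof. by case: z => x g /= ->. Qed.

Lemma central_ker (z : E) : z.2 = one -> central z.
Proof. by move/ext_kerE->; apply: embA_central. Qed.

Lemma ext_commg_proj (z w : E) : [~ z, w].2 = one.
Proof.
rewrite /= [gmul z.2 w.2]GmulC [gmul (ginv w.2) _]GmulA.
by rewrite GmulVg Gmul1g GmulVg.
Qed.

Definition ext_gen (k : nat) : E := (0, genX k 1).

Lemma ext_genX_proj k e : (ext_gen k ^+ e).2 = genX k e.
Proof. by elim: e => [|e IHe]; rewrite ?genX0 // expgS /= IHe genXD. Qed.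

Definition ext_carry i : A := (ext_gen i ^+ N i).1.
Definition ext_comm i j : A := [~ ext_gen i, ext_gen j].1.

Lemma ext_gen_expN i : ext_gen i ^+ N i = embA (ext_carry i).
Proof. by apply: ext_kerE; rewrite ext_genX_proj -genX_modn modnn genX0. Qed.

Lemma ext_gen_commg i j : [~ ext_gen i, ext_gen j] = embA (ext_comm i j).
Proof. exact/ext_kerE/ext_commg_proj. Qed.

Lemma central_commg_gen (k l : nat) : central [~ ext_gen k, ext_gen l].
Proof. exact/central_ker/ext_commg_proj. Qed.

Definition ext_section (g : G) : E := \prod_(i < n) ext_gen i ^+ g i.

Lemma ext_section_proj g : (ext_section g).2 = g.
Proof.
have proj_morph : {morph (fun z : E => z.2) : z w / z * w >-> gmul z w} by [].
rewrite /ext_section (big_morph _ proj_morph (erefl : (1 : E).2 = one)).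
by under eq_bigr do rewrite ext_genX_proj; apply: Gprod_genX.
Qed.

Lemma valid_ext_comm : valid_b p n m A ext_comm.
Proof.
move=> i j _; apply: embA_inj; rewrite -embAX -ext_gen_commg -(muln1 (N i)).
rewrite -commXXg_central ?ext_gen_expN; last exact: central_commg_gen.
by apply/eqP/commgP/commute_sym/embA_central.
Qed.

Lemma ext_section_nat g : ext_section g = \prod_(0 <= k < n) ext_gen k ^+ Gcoord g k.
Proof. by rewrite big_mkord; apply: eq_bigr => i _; rewrite GcoordE. Qed.

Lemma ext_section_mul_expand g h :
  ext_section g * ext_section h =
  \prod_(i < n) ext_gen i ^+ (g i + h i)%N *
  \prod_(j < n) \prod_(i < n | (i < j)%N) [~ ext_gen j, ext_gen i] ^+ (g j * h i)%N.
Proof.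
rewrite !ext_section_nat prodXg_mul; last exact: central_commg_gen.
congr (_ * _); rewrite big_mkord; apply: eq_bigr => j _; first by rewrite !GcoordE.
rewrite (big_nat_widen _ _ _ _ _ (ltnW (ltn_ord j))) big_mkord.
by apply: eq_bigr => i _; rewrite !GcoordE.
Qed.

Lemma ext_prod_carry g h :
  \prod_(i < n) ext_gen i ^+ (g i + h i)%N =
  embA (carry_cochain ext_carry g h) * ext_section (gmul g h).
Proof.
have split_i i : ext_gen i ^+ (g i + h i)%N =
    embA (ext_carry i *+ ((g i + h i) %/ N i)) * ext_gen i ^+ gmul g h i.
  by rewrite GmulE {1}(divn_eq (g i + h i) (N i)) expgnDr mulnC expgnA ext_gen_expN embAX.
rewrite (eq_bigr _ (fun i _ => split_i i)) prodgM_commute ?embA_sum // => i j _ _.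
exact/commute_sym/embA_central.
Qed.

Lemma ext_prod_comm g h :
  \prod_(j < n) \prod_(i < n | (i < j)%N) [~ ext_gen j, ext_gen i] ^+ (g j * h i)%N =
  embA (- cross_cochain ext_comm g h).
Proof.
transitivity (\prod_(j < n) \prod_(i < n | (i < j)%N) embA (- ext_comm i j *+ (g j * h i))).
  by apply: eq_bigr => j _; apply: eq_bigr => i _; rewrite -invgR ext_gen_commg embAV embAX.
rewrite (eq_bigr _ (fun j _ => embA_sum _ _ _)) embA_sum; congr embA.
rewrite /cross_cochain -sumrN (exchange_big_dep predT) //=; apply: eq_bigr => j _.
by rewrite -sumrN; apply: eq_bigr => i _; rewrite mulNrn mulnC.
Qed.

Lemma ext_section_mul g h :
  ext_section g * ext_section h =
  embA (alpha p n m A ext_carry ext_comm g h) * ext_section (gmul g h).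
Proof.
rewrite ext_section_mul_expand ext_prod_carry ext_prod_comm alphaE embAD.
by rewrite -mulgA (embA_central _ (ext_section _)) mulgA.
Qed.

Lemma ext_section_fst g h :
  (ext_section g).1 + (ext_section h).1 + f g h =
  alpha p n m A ext_carry ext_comm g h + (ext_section (gmul g h)).1.
Proof.
have := congr1 fst (ext_section_mul g h).
by rewrite !ext_mul_fst !ext_section_proj /= cocycle_norm1g // addr0.
Qed.

Lemma ext_cohomologous : cohomologous p n m A f (alpha p n m A ext_carry ext_comm).
Proof.
exists (fun g => - (ext_section g).1) => g h.
move: (ext_section_fst g h); set al := alpha _ _ _ _ _ _ g h.
set cg := (ext_section g).1; set ch := (ext_section h).1; set cgh := (ext_section _).1.
move/(canRL (addKr _)) ->.
by rewrite addrCA [al + _]addrC addrK opprK opprD (addrC (- cg)) addrAC.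
Qed.

End Extension.

Lemma cocycle_cohomologous_alpha p n (m : 'I_n -> nat) (A : zmodType) (p_gt0 : (0 < p)%N)
    (f : Gp p n m -> Gp p n m -> A) :
  is_cocycle p n m A f ->
  exists (a : 'I_n -> A) (b : 'I_n -> 'I_n -> A),
    valid_b p n m A b /\ cohomologous p n m A f (alpha p n m A a b).
Proof.
move=> f_cocycle; set k := f (Gone m p_gt0) (Gone m p_gt0).
have f0_cocycle : is_cocycle p n m A (fun g h => f g h - k).
  by apply: cocycleB => //; apply: cocycle_const.
have f0_norm : f (Gone m p_gt0) (Gone m p_gt0) - k = 0 by rewrite subrr.
exists (ext_carry f0_cocycle f0_norm), (ext_comm f0_cocycle f0_norm).
split; first exact: valid_ext_comm.
have := coboundaryD (ext_cohomologous f0_cocycle f0_norm) (coboundary_const p m k).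
by apply: iffLR; apply: eq_coboundary => g h; rewrite addrAC subrK.
Qed.

Theorem lemma2p1 (p n : nat) (m : 'I_n -> nat) (A : finZmodType) :
  prime p ->
  (forall i : 'I_n, 1 <= m i)%N ->
  (forall i j : 'I_n, (i <= j)%N -> (m i <= m j)%N) ->
  p.-nat #|A| ->
  [/\ (forall (a : 'I_n -> A) (b : 'I_n -> 'I_n -> A),
         valid_b p n m A b -> is_cocycle p n m A (alpha p n m A a b)),
      (forall f : Gp p n m -> Gp p n m -> A, is_cocycle p n m A f ->
         exists (a : 'I_n -> A) (b : 'I_n -> 'I_n -> A),
           valid_b p n m A b /\ cohomologous p n m A f (alpha p n m A a b)),
      (forall (a : 'I_n -> A) (b : 'I_n -> 'I_n -> A), valid_b p n m A b ->
         (is_coboundary p n m A (alpha p n m A a b) <->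
          (forall i : 'I_n, in_pmul A p (m i) (a i)) /\
          (forall i j : 'I_n, (i < j)%N -> b i j = 0)))
    & (forall (a a' : 'I_n -> A) (b b' : 'I_n -> 'I_n -> A),
         valid_b p n m A b -> valid_b p n m A b' ->
         (cohomologous p n m A (alpha p n m A a b) (alpha p n m A a' b') <->
          (forall i : 'I_n, in_pmul A p (m i) (a i - a' i)) /\
          (forall i j : 'I_n, (i < j)%N -> b i j = b' i j)))].
Proof.
move=> p_prime m_gt0 m_mono _.
have p_gt0 := prime_gt0 p_prime.
have N_gt1 i : (1 < p ^ m i)%N.
  by rewrite -{1}(expn0 p) ltn_exp2l ?prime_gt1 ?m_gt0.
split.
- by move=> a b; apply: alpha_cocycle.
- exact: cocycle_cohomologous_alpha.
- by move=> a b _; apply: alpha_coboundaryP.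
- by move=> a a' b b' _ _; apply: alpha_cohomologousP.
Qed.
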